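(* Let $\overrightarrow{U}(t)$ be a closed unit timelike dual curve in the 3-dimensional dual Lorentzian space with dual Frenet frame $\{\overrightarrow{U_1},\overrightarrow{U_2},\overrightarrow{U_3}\}$, dual curvature $\kappa$ and dual torsion $\tau$, let $\Phi=\varphi+\varepsilon\varphi^*$ be a constant dual number, let $(V_1)$ be the parallel ruled surface of $(U_1)$, corresponding to $\overrightarrow{V_1}=\cosh\Phi\,\overrightarrow{U_1}+\sinh\Phi\,\overrightarrow{U_3}$, and let $(V_3)$ be the closed ruled surface corresponding to $\overrightarrow{V_3}=-\sinh\Phi\,\overrightarrow{U_1}-\cosh\Phi\,\overrightarrow{U_3}$. With $P=p+\varepsilon p^*=\kappa\cosh\Phi+\tau\sinh\Phi$ and $Q=q+\varepsilon q^*=-\kappa\sinh\Phi-\tau\cosh\Phi$, the pitch, the dual angle of pitch and the drall of $(V_3)$ are $$L_{V_3}=\oint p^*\,dt,\qquad \Lambda_{V_3}=-\oint P\,dt,\qquad P_{V_3}=\frac{q^*}{q}.$$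
   Context: Dual numbers are $\lambda+\varepsilon\lambda^*$ with $\lambda,\lambda^*\in\mathbb{R}$ and $\varepsilon^2=0$; dual vectors are $\overrightarrow{A}=\overrightarrow{a}+\varepsilon\overrightarrow{a}^*$ with $\overrightarrow{a},\overrightarrow{a}^*\in\mathbb{R}^3$. The Lorentzian inner product on $\mathbb{R}^3$ is $\langle a,b\rangle=-a_1b_1+a_2b_2+a_3b_3$, extended to dual vectors by $\langle \overrightarrow{A},\overrightarrow{B}\rangle=\langle\overrightarrow{a},\overrightarrow{b}\rangle+\varepsilon(\langle\overrightarrow{a},\overrightarrow{b}^*\rangle+\langle\overrightarrow{a}^*,\overrightarrow{b}\rangle)$. For a dual number $\Phi=\varphi+\varepsilon\varphi^*$: $\sinh\Phi=\sinh\varphi+\varepsilon\varphi^*\cosh\varphi$, $\cosh\Phi=\cosh\varphi+\varepsilon\varphi^*\sinh\varphi$. The closed unit timelike dual curve $\overrightarrow{U}(t)$ (integrals $\oint$ over one closed period of $t$) has Frenet frame $\overrightarrow{U_1}=\overrightarrow{U}$ (timelike), $\overrightarrow{U_2},\overrightarrow{U_3}$ (spacelike), mutually orthogonal unit dual vectors, satisfying $\overrightarrow{U_1}'=\kappa\overrightarrow{U_2}$, $\overrightarrow{U_2}'=\kappa\overrightarrow{U_1}-\tau\overrightarrow{U_3}$, $\overrightarrow{U_3}'=\tau\overrightarrow{U_2}$. Set $\overrightarrow{V_2}=\overrightarrow{U_2}$; then $\overrightarrow{V_1}'=P\overrightarrow{V_2}$, $\overrightarrow{V_2}'=P\overrightarrow{V_1}-Q\overrightarrow{V_3}$,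 $\overrightarrow{V_3}'=Q\overrightarrow{V_2}$. Write $\overrightarrow{V_i}=\overrightarrow{v_i}+\varepsilon\overrightarrow{v_i}^*$. The dual Steiner vector is taken (frame vectors written outside the integrals) as $\overrightarrow{D}=\overrightarrow{d}+\varepsilon\overrightarrow{d}^*=\overrightarrow{U_1}\oint\tau\,dt-\overrightarrow{U_3}\oint\kappa\,dt=-\overrightarrow{V_1}\oint Q\,dt+\overrightarrow{V_3}\oint P\,dt$, so $\overrightarrow{d}=-\overrightarrow{v_1}\oint q\,dt+\overrightarrow{v_3}\oint p\,dt$, $\overrightarrow{d}^*=-\overrightarrow{v_1}\oint q^*dt-\overrightarrow{v_1}^*\oint q\,dt+\overrightarrow{v_3}\oint p^*dt+\overrightarrow{v_3}^*\oint p\,dt$. For the closed ruled surface corresponding to a unit dual curve $\overrightarrow{X}=\overrightarrow{x}+\varepsilon\overrightarrow{x}^*$: pitch $L_X=\langle\overrightarrow{d},\overrightarrow{x}^*\rangle+\langle\overrightarrow{d}^*,\overrightarrow{x}\rangle$, dual angle of pitch $\Lambda_X=-\langle\overrightarrow{D},\overrightarrow{X}\rangle$, drall $P_X=\langle d\overrightarrow{x},d\overrightarrow{x}^*\rangle/\langle d\overrightarrow{x},d\overrightarrow{x}\rangle$. *)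

From Stdlib Require Import Reals.
From Coquelicot Require Import Coquelicot.
Open Scope R_scope.

Record dnum := mkD { dre : R; ddu : R }.

Definition dadd (x y : dnum) : dnum := mkD (dre x + dre y) (ddu x + ddu y).
Definition dopp (x : dnum) : dnum := mkD (- dre x) (- ddu x).
Definition dmul (x y : dnum) : dnum :=
  mkD (dre x * dre y) (dre x * ddu y + ddu x * dre y).
Definition done : dnum := mkD 1 0.
Definition dzero : dnum := mkD 0 0.

Definition dsinh (x : dnum) : dnum := mkD (sinh (dre x)) (ddu x * cosh (dre x)).
Definition dcosh (x : dnum) : dnum := mkD (cosh (dre x)) (ddu x * sinh (dre x)).

Record vec3 := mkV { c1 : R; c2 : R; c3 : R }.

Definition linner (a b : vec3) : R := - c1 a * c1 b + c2 a * c2 b + c3 a * c3 b.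

Record dvec := mkDV { vre : vec3; vdu : vec3 }.

Definition vadd (a b : vec3) : vec3 := mkV (c1 a + c1 b) (c2 a + c2 b) (c3 a + c3 b).
Definition vscal (l : R) (a : vec3) : vec3 := mkV (l * c1 a) (l * c2 a) (l * c3 a).

Definition dvadd (A B : dvec) : dvec := mkDV (vadd (vre A) (vre B)) (vadd (vdu A) (vdu B)).
Definition dscal (l : dnum) (A : dvec) : dvec :=
  mkDV (vscal (dre l) (vre A)) (vadd (vscal (dre l) (vdu A)) (vscal (ddu l) (vre A))).

Definition dinner (A B : dvec) : dnum :=
  mkD (linner (vre A) (vre B)) (linner (vre A) (vdu B) + linner (vdu A) (vre B)).

Definition vec_is_derive (x : R -> vec3) (t : R) (x' : vec3) : Prop :=
  is_derive (fun s => c1 (x s)) t (c1 x') /\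
  is_derive (fun s => c2 (x s)) t (c2 x') /\
  is_derive (fun s => c3 (x s)) t (c3 x').

Definition dvec_is_derive (X : R -> dvec) (t : R) (X' : dvec) : Prop :=
  vec_is_derive (fun s => vre (X s)) t (vre X') /\
  vec_is_derive (fun s => vdu (X s)) t (vdu X').

Definition vDerive (x : R -> vec3) (t : R) : vec3 :=
  mkV (Derive (fun s => c1 (x s)) t) (Derive (fun s => c2 (x s)) t)
      (Derive (fun s => c3 (x s)) t).

(* ---------- closed-curve integral over one period [0, T] ---------- *)
Definition oint (T : R) (f : R -> R) : R := RInt f 0 T.
Definition doint (T : R) (F : R -> dnum) : dnum :=
  mkD (oint T (fun t => dre (F t))) (oint T (fun t => ddu (F t))).

Definition V1of (Phi : dnum) (U1 U3 : R -> dvec) (t : R) : dvec :=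
  dvadd (dscal (dcosh Phi) (U1 t)) (dscal (dsinh Phi) (U3 t)).
Definition V3of (Phi : dnum) (U1 U3 : R -> dvec) (t : R) : dvec :=
  dvadd (dscal (dopp (dsinh Phi)) (U1 t)) (dscal (dopp (dcosh Phi)) (U3 t)).
Definition Pof (Phi : dnum) (kappa tau : R -> dnum) (t : R) : dnum :=
  dadd (dmul (kappa t) (dcosh Phi)) (dmul (tau t) (dsinh Phi)).
Definition Qof (Phi : dnum) (kappa tau : R -> dnum) (t : R) : dnum :=
  dadd (dopp (dmul (kappa t) (dsinh Phi))) (dopp (dmul (tau t) (dcosh Phi))).

(* dual Steiner vector D = U1 oint tau - U3 oint kappa (frame vectors outside) *)
Definition Steiner (T : R) (U1 U3 : R -> dvec) (kappa tau : R -> dnum) (t : R) : dvec :=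
  dvadd (dscal (doint T tau) (U1 t)) (dscal (dopp (doint T kappa)) (U3 t)).

Definition pitch (D X : dvec) : R :=
  linner (vre D) (vdu X) + linner (vdu D) (vre X).
Definition dual_angle_pitch (D X : dvec) : dnum := dopp (dinner D X).
Definition drall (X : R -> dvec) (t : R) : R :=
  linner (vDerive (fun s => vre (X s)) t) (vDerive (fun s => vdu (X s)) t) /
  linner (vDerive (fun s => vre (X s)) t) (vDerive (fun s => vre (X s)) t).

(* The Steiner vector D = U1 oint tau - U3 oint kappa meets V3 = - sinh Phi U1 - cosh Phi U3
   only through <U1,U1> = -1 and <U3,U3> = 1, so <D, V3> = oint (kappa cosh Phi + tau sinh Phi)
   = oint P by linearity of the integral; the pitch is the dual part of <D, V3> and the dual
   angle of pitch is - <D, V3>.  Differentiating V3 with the Frenet equations gives V3' = Q U2, and for a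
   curve whose derivative is a dual multiple L W of a unit vector W, <dx, dx*> / <dx, dx> equals
   l l* / l^2 = l* / l because <w, w*> = 0. *)
From Stdlib Require Import Reals Lra.
From Coquelicot Require Import Coquelicot.
Open Scope R_scope.

Lemma dnum_eq (x y : dnum) : dre x = dre y -> ddu x = ddu y -> x = y.
Proof. destruct x, y; simpl; intros -> ->; reflexivity. Qed.

Lemma dinner_comm (A B : dvec) : dinner A B = dinner B A.
Proof.
  destruct A as [[] []], B as [[] []]; apply dnum_eq; unfold dinner, linner; simpl; ring.
Qed.

Lemma dinner_comb2 (a b c d : dnum) (A B C D : dvec) :
  dinner (dvadd (dscal a A) (dscal b B)) (dvadd (dscal c C) (dscal d D)) =
  dadd (dadd (dmul (dmul a c) (dinner A C)) (dmul (dmul a d) (dinner A D)))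
       (dadd (dmul (dmul b c) (dinner B C)) (dmul (dmul b d) (dinner B D))).
Proof.
  destruct a, b, c, d, A as [[] []], B as [[] []], C as [[] []], D as [[] []].
  apply dnum_eq; unfold dinner, linner; simpl; ring.
Qed.

Lemma pitch_ddu_dinner (D X : dvec) : pitch D X = ddu (dinner D X).
Proof. reflexivity. Qed.

Definition dintegrable (T : R) (F : R -> dnum) : Prop :=
  ex_RInt (fun s => dre (F s)) 0 T /\ ex_RInt (fun s => ddu (F s)) 0 T.

Lemma dintegrable_continuous (T : R) (F : R -> dnum) :
  (forall t, continuous (fun s => dre (F s)) t /\ continuous (fun s => ddu (F s)) t) ->
  dintegrable T F.
Proof.
  intro HF; split; apply (ex_RInt_continuous (V := R_CompleteNormedModule));
    intros z _; apply HF.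
Qed.

Lemma ex_RInt_scal_R (f : R -> R) (a b l : R) :
  ex_RInt f a b -> ex_RInt (fun s => l * f s) a b.
Proof. exact (ex_RInt_scal f a b l). Qed.

Lemma RInt_scal_R (f : R -> R) (a b l : R) :
  ex_RInt f a b -> RInt (fun s => l * f s) a b = l * RInt f a b.
Proof. exact (RInt_scal f a b l). Qed.

Lemma ex_RInt_ext_R (f g : R -> R) (a b : R) :
  (forall x, f x = g x) -> ex_RInt f a b -> ex_RInt g a b.
Proof. intro Hfg; apply ex_RInt_ext; intros x _; apply Hfg. Qed.

Lemma RInt_ext_R (f g : R -> R) (a b : R) :
  (forall x, f x = g x) -> RInt f a b = RInt g a b.
Proof. intro Hfg; apply RInt_ext; intros x _; apply Hfg. Qed.

Lemma ex_RInt_comb2 (f g : R -> R) (a b l m : R) :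
  ex_RInt f a b -> ex_RInt g a b -> ex_RInt (fun s => l * f s + m * g s) a b.
Proof.
  intros Hf Hg.
  apply (ex_RInt_plus (fun s => l * f s) (fun s => m * g s)); apply ex_RInt_scal_R; assumption.
Qed.

Lemma RInt_comb2 (f g : R -> R) (a b l m : R) :
  ex_RInt f a b -> ex_RInt g a b ->
  RInt (fun s => l * f s + m * g s) a b = l * RInt f a b + m * RInt g a b.
Proof.
  intros Hf Hg.
  rewrite (RInt_plus (fun s => l * f s) (fun s => m * g s))
    by (apply ex_RInt_scal_R; assumption).
  rewrite !RInt_scal_R by assumption; reflexivity.
Qed.

Lemma dintegrable_dmul_r (T : R) (F : R -> dnum) (a : dnum) :
  dintegrable T F -> dintegrable T (fun s => dmul (F s) a).
Proof.
  intros [Hre Hdu]; split; simpl.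
  - apply (ex_RInt_ext_R (fun s => dre a * dre (F s))).
    + intros; apply Rmult_comm.
    + apply ex_RInt_scal_R; assumption.
  - apply (ex_RInt_ext_R (fun s => ddu a * dre (F s) + dre a * ddu (F s))).
    + intros; ring.
    + apply ex_RInt_comb2; assumption.
Qed.

Lemma doint_dmul_r (T : R) (F : R -> dnum) (a : dnum) :
  dintegrable T F -> doint T (fun s => dmul (F s) a) = dmul (doint T F) a.
Proof.
  intros [Hre Hdu]; apply dnum_eq; unfold doint, oint; simpl.
  - rewrite (RInt_ext_R _ (fun s => dre a * dre (F s))) by (intros; apply Rmult_comm).
    rewrite RInt_scal_R by assumption; ring.
  - rewrite (RInt_ext_R _ (fun s => ddu a * dre (F s) + dre a * ddu (F s)))
      by (intros; ring).
    rewrite RInt_comb2 by assumption; ring.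
Qed.

Lemma doint_dadd (T : R) (F G : R -> dnum) :
  dintegrable T F -> dintegrable T G ->
  doint T (fun s => dadd (F s) (G s)) = dadd (doint T F) (doint T G).
Proof.
  intros [HFr HFd] [HGr HGd]; apply dnum_eq; unfold doint, oint; simpl.
  - rewrite (RInt_ext_R _ (fun s => 1 * dre (F s) + 1 * dre (G s))) by (intros; ring).
    rewrite RInt_comb2 by assumption; ring.
  - rewrite (RInt_ext_R _ (fun s => 1 * ddu (F s) + 1 * ddu (G s))) by (intros; ring).
    rewrite RInt_comb2 by assumption; ring.
Qed.

Lemma doint_Pof (T : R) (Phi : dnum) (kappa tau : R -> dnum) :
  dintegrable T kappa -> dintegrable T tau ->
  doint T (Pof Phi kappa tau) =
  dadd (dmul (doint T kappa) (dcosh Phi)) (dmul (doint T tau) (dsinh Phi)).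
Proof.
  intros Hk Ht; unfold Pof.
  rewrite doint_dadd by (apply dintegrable_dmul_r; assumption).
  rewrite !doint_dmul_r by assumption; reflexivity.
Qed.

Lemma vec_is_derive_vadd (x y : R -> vec3) (t : R) (x' y' : vec3) :
  vec_is_derive x t x' -> vec_is_derive y t y' ->
  vec_is_derive (fun s => vadd (x s) (y s)) t (vadd x' y').
Proof.
  intros (Hx1 & Hx2 & Hx3) (Hy1 & Hy2 & Hy3); simpl.
  split; [| split]; apply (is_derive_plus (V := R_NormedModule)); assumption.
Qed.

Lemma vec_is_derive_vscal (x : R -> vec3) (t l : R) (x' : vec3) :
  vec_is_derive x t x' -> vec_is_derive (fun s => vscal l (x s)) t (vscal l x').
Proof.
  intros (H1 & H2 & H3); simpl; split; [| split]; apply is_derive_scal; assumption.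
Qed.

Lemma dvec_is_derive_dscal (X : R -> dvec) (t : R) (l : dnum) (X' : dvec) :
  dvec_is_derive X t X' -> dvec_is_derive (fun s => dscal l (X s)) t (dscal l X').
Proof.
  intros [Hre Hdu]; split; simpl.
  - apply vec_is_derive_vscal; assumption.
  - apply vec_is_derive_vadd; apply vec_is_derive_vscal; assumption.
Qed.

Lemma dvec_is_derive_dvadd (X Y : R -> dvec) (t : R) (X' Y' : dvec) :
  dvec_is_derive X t X' -> dvec_is_derive Y t Y' ->
  dvec_is_derive (fun s => dvadd (X s) (Y s)) t (dvadd X' Y').
Proof.
  intros [HXr HXd] [HYr HYd]; split; apply vec_is_derive_vadd; assumption.
Qed.

Lemma vDerive_is_derive (x : R -> vec3) (t : R) (x' : vec3) :
  vec_is_derive x t x' -> vDerive x t = x'.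
Proof.
  destruct x'; intros (H1 & H2 & H3); unfold vDerive; simpl in *.
  f_equal; apply is_derive_unique; assumption.
Qed.

Lemma drall_of_derive_dscal (X : R -> dvec) (t : R) (L : dnum) (W : dvec) (c : R) :
  dvec_is_derive X t (dscal L W) -> dinner W W = mkD c 0 -> c <> 0 ->
  drall X t = ddu L / dre L.
Proof.
  intros [Hre Hdu] HW Hc.
  unfold drall; rewrite (vDerive_is_derive _ _ _ Hre), (vDerive_is_derive _ _ _ Hdu).
  injection HW as Hww Hwws.
  destruct L as [l ls], W as [w ws]; simpl in *.
  assert (Hortho : linner w ws = 0) by (unfold linner in *; lra).
  replace (linner (vscal l w) (vadd (vscal l ws) (vscal ls w)))
    with (l * l * linner w ws + l * ls * linner w w) by (unfold linner; simpl; ring).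
  replace (linner (vscal l w) (vscal l w)) with (l * l * linner w w)
    by (unfold linner; simpl; ring).
  rewrite Hortho, Hww.
  destruct (Req_dec l 0) as [-> | Hl].
  - (* Both sides are junk divisions by 0, which Rocq evaluates to 0. *)
    unfold Rdiv; rewrite Rmult_0_l, Rmult_0_l, Rinv_0; ring.
  - field; split; assumption.
Qed.

Lemma V3of_is_derive (Phi : dnum) (U1 U2 U3 : R -> dvec) (kappa tau : R -> dnum) (t : R) :
  dvec_is_derive U1 t (dscal (kappa t) (U2 t)) ->
  dvec_is_derive U3 t (dscal (tau t) (U2 t)) ->
  dvec_is_derive (V3of Phi U1 U3) t (dscal (Qof Phi kappa tau t) (U2 t)).
Proof.
  intros HU1 HU3.
  replace (dscal (Qof Phi kappa tau t) (U2 t))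
    with (dvadd (dscal (dopp (dsinh Phi)) (dscal (kappa t) (U2 t)))
                (dscal (dopp (dcosh Phi)) (dscal (tau t) (U2 t)))).
  - apply dvec_is_derive_dvadd; apply dvec_is_derive_dscal; assumption.
  - unfold Qof; destruct Phi, (kappa t), (tau t), (U2 t) as [[] []].
    unfold dvadd, dscal, vadd, vscal; simpl; f_equal; f_equal; ring.
Qed.

Lemma dinner_Steiner_V3of (T : R) (Phi : dnum) (U1 U3 : R -> dvec) (kappa tau : R -> dnum)
    (t : R) :
  dinner (U1 t) (U1 t) = dopp done -> dinner (U3 t) (U3 t) = done ->
  dinner (U1 t) (U3 t) = dzero ->
  dinner (Steiner T U1 U3 kappa tau t) (V3of Phi U1 U3 t) =
  dadd (dmul (doint T kappa) (dcosh Phi)) (dmul (doint T tau) (dsinh Phi)).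
Proof.
  intros H11 H33 H13; unfold Steiner, V3of.
  rewrite dinner_comb2, H11, H33, H13, (dinner_comm (U3 t) (U1 t)), H13.
  destruct Phi, (doint T kappa), (doint T tau); apply dnum_eq; simpl; ring.
Qed.

Theorem theorem2p3
  (T : R) (U1 U2 U3 : R -> dvec) (kappa tau : R -> dnum) (Phi : dnum)
  (HT : 0 < T)
  (Hclosed : forall t, U1 (t + T) = U1 t)
  (H11 : forall t, dinner (U1 t) (U1 t) = dopp done)
  (H22 : forall t, dinner (U2 t) (U2 t) = done)
  (H33 : forall t, dinner (U3 t) (U3 t) = done)
  (H12 : forall t, dinner (U1 t) (U2 t) = dzero)
  (H13 : forall t, dinner (U1 t) (U3 t) = dzero)
  (H23 : forall t, dinner (U2 t) (U3 t) = dzero)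
  (F1 : forall t, dvec_is_derive U1 t (dscal (kappa t) (U2 t)))
  (F2 : forall t, dvec_is_derive U2 t
          (dvadd (dscal (kappa t) (U1 t)) (dscal (dopp (tau t)) (U3 t))))
  (F3 : forall t, dvec_is_derive U3 t (dscal (tau t) (U2 t)))
  (Hk : forall t, continuous (fun s => dre (kappa s)) t /\
                  continuous (fun s => ddu (kappa s)) t)
  (Ht : forall t, continuous (fun s => dre (tau s)) t /\
                  continuous (fun s => ddu (tau s)) t) :
  forall t : R,
    pitch (Steiner T U1 U3 kappa tau t) (V3of Phi U1 U3 t)
      = oint T (fun s => ddu (Pof Phi kappa tau s)) /\
    dual_angle_pitch (Steiner T U1 U3 kappa tau t) (V3of Phi U1 U3 t)
      = dopp (doint T (Pof Phi kappa tau)) /\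
    drall (V3of Phi U1 U3) t
      = ddu (Qof Phi kappa tau t) / dre (Qof Phi kappa tau t).
Proof.
  intro t.
  assert (HDV : dinner (Steiner T U1 U3 kappa tau t) (V3of Phi U1 U3 t)
                = doint T (Pof Phi kappa tau)).
  { rewrite dinner_Steiner_V3of, doint_Pof; auto using dintegrable_continuous. }
  split; [| split].
  - rewrite pitch_ddu_dinner, HDV; reflexivity.
  - unfold dual_angle_pitch; rewrite HDV; reflexivity.
  - apply (drall_of_derive_dscal _ _ _ (U2 t) 1).
    + apply V3of_is_derive; auto.
    + apply H22.
    + apply R1_neq_R0.
Qed.
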